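(* Let $L$ be a Lipschitz language. Every affinely satisfiable $L$-theory has a model (an $L$-structure satisfying all its conditions).
   Context: A Lipschitz language $L$ consists of constant, function and relation symbols, each function symbol $F$ / relation symbol $R$ with an arity $n\ge1$ and a Lipschitz constant $\lambda_F,\lambda_R\ge 0$, and contains a binary symbol $d$ with $\lambda_d=1$. An $L$-structure is a complete metric space $(M,d)$ of diameter $\le1$ with interpretations $c^M\in M$, $\lambda_F$-Lipschitz $F^M:M^n\to M$, $\lambda_R$-Lipschitz $R^M:M^n\to[0,1]$ (metric on $M^n$: $\sum_i d(a_i,b_i)$). Affine formulas are built from atomic formulas $1$, $d(t_1,t_2)$, $R(t_1,\dots,t_n)$ by $\phi+\psi$, $r\phi$ ($r\in\mathbb R$), $\sup_x$, $\inf_x$, with values defined in the evident way. A closed condition is an expression $\sigma\le\eta$ with $\sigma,\eta$ affine sentences; $M$ satisfies it if $\sigma^M\le\eta^M$; a theory is a set of closed conditions. A theory $T$ is affinely satisfiable if for all conditions $\phi_1\le\psi_1,\dots,\phi_n\le\psi_n$ in $T$ and all reals $r_1,\dots,r_n\ge 0$, the condition $\sum_i r_i\phi_i\le\sum_i r_i\psi_i$ is satisfied by some $L$-structure. *)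

From HB Require Import structures.
From mathcomp Require Import all_boot all_order all_algebra.
From mathcomp Require Import boolp classical_sets reals.
From mathcomp Require Import Rstruct.
From Stdlib Require Rdefinitions.
Local Notation R := Rdefinitions.R.
From Stdlib Require List.

Set Implicit Arguments.
Unset Strict Implicit.
Unset Printing Implicit Defensive.

Import Order.TTheory GRing.Theory Num.Theory.
Local Open Scope classical_set_scope.
Local Open Scope ring_scope.

(* Lipschitz languages.  The distinguished binary symbol d (with       *)
(* Lipschitz constant 1) is built into the syntax below as the atomic  *)
(* formula [FDist]; it is always interpreted as the metric.            *)
Record language := Language {
  const_sym : Type;
  func_sym : Type;
  rel_sym : Type;
  func_arity : func_sym -> nat;
  rel_arity : rel_sym -> nat;
  func_arity_pos : forall F, (0 < func_arity F)%N;
  rel_arity_pos : forall P, (0 < rel_arity P)%N;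
  func_lip : func_sym -> R;
  rel_lip : rel_sym -> R;
  func_lip_ge0 : forall F, 0 <= func_lip F;
  rel_lip_ge0 : forall P, 0 <= rel_lip P
}.

Record structure (L : language) := Structure {
  carrier :> Type;
  carrier_inhabited : inhabited carrier;
  dist : carrier -> carrier -> R;
  dist_ge0 : forall x y, 0 <= dist x y;
  dist_eq0 : forall x y, dist x y = 0 <-> x = y;
  dist_sym : forall x y, dist x y = dist y x;
  dist_triangle : forall x y z, dist x z <= dist x y + dist y z;
  dist_le1 : forall x y, dist x y <= 1;
  dist_complete : forall u : nat -> carrier,
    (forall eps : R, 0 < eps -> exists N : nat,
        forall m n : nat, (N <= m)%N -> (N <= n)%N -> dist (u m) (u n) < eps) ->
    exists l : carrier, forall eps : R, 0 < eps -> exists N : nat,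
        forall n : nat, (N <= n)%N -> dist (u n) l < eps;
  cinterp : const_sym L -> carrier;
  finterp : forall F : func_sym L, ('I_(func_arity F) -> carrier) -> carrier;
  finterp_lip : forall (F : func_sym L) (a b : 'I_(func_arity F) -> carrier),
    dist (finterp a) (finterp b)
      <= func_lip F * \sum_(i < func_arity F) dist (a i) (b i);
  rinterp : forall P : rel_sym L, ('I_(rel_arity P) -> carrier) -> R;
  rinterp_range : forall (P : rel_sym L) (a : 'I_(rel_arity P) -> carrier),
    0 <= rinterp a <= 1;
  rinterp_lip : forall (P : rel_sym L) (a b : 'I_(rel_arity P) -> carrier),
    `|rinterp a - rinterp b|
      <= rel_lip P * \sum_(i < rel_arity P) dist (a i) (b i)
}.

Inductive term (L : language) : Type :=
| TVar : nat -> term L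
| TConst : const_sym L -> term L
| TFun : forall F : func_sym L, ('I_(func_arity F) -> term L) -> term L.

Inductive formula (L : language) : Type :=
| FOne : formula L
| FDist : term L -> term L -> formula L
| FRel : forall P : rel_sym L, ('I_(rel_arity P) -> term L) -> formula L
| FAdd : formula L -> formula L -> formula L
| FScale : R -> formula L -> formula L
| FSup : nat -> formula L -> formula L
| FInf : nat -> formula L -> formula L.

Arguments FOne {L}.

Fixpoint term_fv L (t : term L) (x : nat) : Prop :=
  match t with
  | TVar y => y = x
  | TConst _ => False
  | TFun _ args => exists i, term_fv (args i) x
  end.

Fixpoint formula_fv L (phi : formula L) (x : nat) : Prop :=
  match phi with
  | FOne => False
  | FDist t1 t2 => term_fv t1 x \/ term_fv t2 x
  | FRel _ args => exists i, term_fv (args i) x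
  | FAdd p q => formula_fv p x \/ formula_fv q x
  | FScale _ p => formula_fv p x
  | FSup y p => formula_fv p x /\ x <> y
  | FInf y p => formula_fv p x /\ x <> y
  end.

Definition sentence L (phi : formula L) : Prop := forall x, ~ formula_fv phi x.

Definition update (M : Type) (e : nat -> M) (x : nat) (m : M) : nat -> M :=
  fun y => if (y == x)%N then m else e y.

Fixpoint term_eval L (M : structure L) (e : nat -> M) (t : term L) : M :=
  match t with
  | TVar y => e y
  | TConst c => cinterp M c
  | TFun F args => finterp (fun i => term_eval e (args i))
  end.

Fixpoint formula_eval L (M : structure L) (e : nat -> M) (phi : formula L) : R :=
  match phi with
  | FOne => 1
  | FDist t1 t2 => dist (term_eval e t1) (term_eval e t2)
  | FRel P args => rinterp (fun i => term_eval e (args i))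
  | FAdd p q => formula_eval e p + formula_eval e q
  | FScale r p => r * formula_eval e p
  | FSup y p => sup [set formula_eval (update e y m) p | m in [set: M]]
  | FInf y p => inf [set formula_eval (update e y m) p | m in [set: M]]
  end.

(* A condition (sigma, eta) stands for "sigma <= eta". *)
Definition condition (L : language) : Type := (formula L * formula L)%type.

Definition closed_condition L (c : condition L) : Prop :=
  sentence c.1 /\ sentence c.2.

(* For sentences the value does not depend on the assignment. *)
Definition satisfies L (M : structure L) (c : condition L) : Prop :=
  forall e : nat -> M, formula_eval e c.1 <= formula_eval e c.2.

Definition theory (L : language) : Type := condition L -> Prop.

Definition is_theory L (T : theory L) : Prop :=
  forall c, T c -> closed_condition c.

Definition comb_formula L (l : seq (R * formula L)) : formula L :=
  foldr (fun p acc => FAdd (FScale p.1 p.2) acc) (FScale 0 FOne) l.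

Definition comb_condition L (l : seq (R * condition L)) : condition L :=
  (comb_formula [seq (p.1, p.2.1) | p <- l],
   comb_formula [seq (p.1, p.2.2) | p <- l]).

Definition affinely_satisfiable L (T : theory L) : Prop :=
  forall l : seq (R * condition L),
    (forall p, List.In p l -> T p.2 /\ 0 <= p.1) ->
    exists M : structure L, satisfies M (comb_condition l).

Definition is_model L (M : structure L) (T : theory L) : Prop :=
  forall c, T c -> satisfies M c.

(* A mean on an index set I is a normalised positive linear functional on the
   bounded functions I -> R; uniform averages over finitely many indices and
   limits along an ultrafilter are means.  For structures (M_i) and a mean L,
   the pseudometric L(d(x_i, y_i)) on the product, after identifying points at
   distance 0, carries an L-structure in which every affine formula takes the
   value L(phi^(M_i)): connectives are linear, and sup/inf commute with L
   because witnesses can be chosen coordinatewise.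

   Given finitely many conditions sigma_c <= eta_c of an affinely satisfiable
   theory, Blackwell's approachability argument picks structures one at a time,
   each satisfying the combination weighted by the positive part of the
   accumulated violations; after K rounds the accumulated violations are
   O(sqrt K), so the average of the chosen structures satisfies every condition
   up to any prescribed delta.  An ultraproduct of these approximate models,
   along an ultrafilter in which the fragments grow and delta shrinks, is an
   exact model. *)

From mathcomp Require Import all_boot all_order all_algebra.
From mathcomp Require Import boolp classical_sets reals Rstruct filter.
From mathcomp Require Import lra.
From Stdlib Require Import ClassicalEpsilon.
From Stdlib Require Rdefinitions.
Local Notation R := Rdefinitions.R.

Set Implicit Arguments.
Unset Strict Implicit.
Unset Printing Implicit Defensive.

Import Order.TTheory GRing.Theory Num.Theory.
Local Open Scope classical_set_scope.
Local Open Scope ring_scope.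

Lemma exists_inv_succ_lt (eps : R) : 0 < eps -> exists n : nat, (n.+1%:R)^-1 < eps.
Proof.
move=> eps_gt0; have /archi_boundP : 0 <= eps^-1 by rewrite invr_ge0 ltW.
set n := Num.bound _ => lt_n; exists n.
rewrite -(invrK eps) ltf_pV2 ?posrE ?ltr0Sn ?invr_gt0 //.
by apply: lt_le_trans lt_n _; rewrite ler_nat.
Qed.

Lemma expN2_gt0 (k : nat) : 0 < 2 ^- k :> R.
Proof. by rewrite invr_gt0 exprn_gt0. Qed.

Lemma expN2S (k : nat) : 2 ^- k.+1 = 2 ^- k / 2 :> R.
Proof. by rewrite exprS invfM mulrC. Qed.

Lemma exists_expN2_lt (eps : R) : 0 < eps -> exists k : nat, 2 ^- k < eps.
Proof.
move=> /exists_inv_succ_lt[k lt_k]; exists k; apply: le_lt_trans lt_k.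
rewrite lef_pV2 ?posrE ?exprn_gt0 ?ltr0Sn // -natrX ler_nat.
exact: ltn_expl.
Qed.

Definition cauchy (T : Type) (d : T -> T -> R) (u : nat -> T) :=
  forall eps : R, 0 < eps -> exists N : nat,
    forall m n : nat, (N <= m)%N -> (N <= n)%N -> d (u m) (u n) < eps.

Definition converges_to (T : Type) (d : T -> T -> R) (u : nat -> T) (l : T) :=
  forall eps : R, 0 < eps -> exists N : nat,
    forall n : nat, (N <= n)%N -> d (u n) l < eps.

Lemma cauchy_fast_subseq (T : Type) (d : T -> T -> R) (u : nat -> T) :
  cauchy d u -> exists phi : nat -> nat, (forall k, phi k <= phi k.+1)%N /\
    forall k m n, (phi k <= m)%N -> (phi k <= n)%N -> d (u m) (u n) < 2 ^- k.
Proof.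
move=> u_cauchy.
have /choice[N N_spec] := fun k => u_cauchy _ (expN2_gt0 k).
exists (fun k => \sum_(j < k.+1) N j)%N; split=> [k|k m n le_m le_n].
  by rewrite [X in (_ <= X)%N]big_ord_recr leq_addr.
by apply: N_spec; [apply: leq_trans le_m|apply: leq_trans le_n];
  rewrite big_ord_recr leq_addl.
Qed.

Lemma dist_xx L (M : structure L) (x : M) : dist x x = 0.
Proof. exact/dist_eq0. Qed.

Lemma geometric_limit L (M : structure L) (w : nat -> M) :
  (forall k, dist (w k) (w k.+1) <= 2 ^- k) ->
  exists y, forall m, dist (w m) y <= 2 * 2 ^- m.
Proof.
move=> w_step.
have dist_shift m d : dist (w m) (w (m + d)%N) <= 2 * 2 ^- m - 2 * 2 ^- (m + d).
  elim: d => [|d IH]; first by rewrite addn0 dist_xx subrr.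
  apply: le_trans (dist_triangle _ (w (m + d)%N) _) _.
  by have := w_step (m + d)%N; rewrite addnS expN2S; lra.
have dist_le m n : (m <= n)%N -> dist (w m) (w n) <= 2 * 2 ^- m.
  move=> /subnKC <-; have := expN2_gt0 (m + (n - m)); have := dist_shift m (n - m)%N; lra.
have [y w_to_y] : exists y, converges_to (@dist L M) w y.
  apply: dist_complete => eps eps_gt0.
  have [k lt_k] : exists k, 2 ^- k < eps / 4 by apply: exists_expN2_lt; rewrite divr_gt0.
  exists k => m n le_m le_n; apply: le_lt_trans (dist_triangle _ (w k) _) _.
  by rewrite dist_sym; have := dist_le k m le_m; have := dist_le k n le_n; lra.
exists y => m; apply/ler_addgt0Pr => eps /w_to_y[N N_spec].
apply: le_trans (dist_triangle _ (w (maxn m N)) _) _.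
by have := dist_le m _ (leq_maxl m N); have := N_spec _ (leq_maxr m N); lra.
Qed.

Section SupImage.
Variables (T : Type) (f : T -> R) (C : R) (t0 : T).
Hypothesis f_bounded : forall t, `|f t| <= C.

Lemma has_sup_image : has_sup [set f t | t in [set: T]].
Proof.
split; first by exists (f t0), t0.
by exists C => _ [t _ <-]; apply: le_trans (ler_norm _) (f_bounded t).
Qed.

Lemma le_sup_image t : f t <= sup [set f t | t in [set: T]].
Proof. by apply: sup_upper_bound; [exact: has_sup_image|exists t]. Qed.

Lemma sup_image_le (D : R) : (forall t, f t <= D) -> sup [set f t | t in [set: T]] <= D.
Proof. by move=> f_le; apply: ge_sup; [exists (f t0), t0|move=> _ [t _ <-]]. Qed.

Lemma sup_image_adherent (eps : R) : 0 < eps ->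
  exists t, sup [set f t | t in [set: T]] - eps < f t.
Proof. by move=> /sup_adherent/(_ has_sup_image)[_ [t _ <-]]; exists t. Qed.

Lemma norm_sup_image_le : `|sup [set f t | t in [set: T]]| <= C.
Proof.
have f_range t : - C <= f t <= C by rewrite -ler_norml.
rewrite ler_norml; apply/andP; split; last first.
  by apply: sup_image_le => t; case/andP: (f_range t).
by apply: le_trans (le_sup_image t0); case/andP: (f_range t0).
Qed.

End SupImage.

Lemma inf_image (T : Type) (f : T -> R) :
  inf [set f t | t in [set: T]] = - sup [set - f t | t in [set: T]].
Proof. by rewrite /inf image_comp. Qed.

Lemma norm_inf_image_le (T : Type) (f : T -> R) (C : R) (t0 : T) :
  (forall t, `|f t| <= C) -> `|inf [set f t | t in [set: T]]| <= C.
Proof.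
by move=> f_bounded; rewrite inf_image normrN (norm_sup_image_le t0) // => t; rewrite normrN.
Qed.

Lemma update_map (A B : Type) (g : A -> B) (e : nat -> A) (y : nat) (a : A) (n : nat) :
  g (update e y a n) = update (fun n => g (e n)) y (g a) n.
Proof. by rewrite /update; case: (n == y). Qed.

Fixpoint formula_bound L (p : formula L) : R :=
  match p with
  | FOne | FDist _ _ | FRel _ _ => 1
  | FAdd p q => formula_bound p + formula_bound q
  | FScale r p => `|r| * formula_bound p
  | FSup _ p | FInf _ p => formula_bound p
  end.

Lemma norm_formula_eval_le L (M : structure L) (p : formula L) (e : nat -> M) :
  `|formula_eval e p| <= formula_bound p.
Proof.
case: (carrier_inhabited M) => m0.
elim: p e => [|t1 t2|P args|p IHp q IHq|r p IHp|y p IHp|y p IHp] e /=.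
- by rewrite normr1.
- by rewrite ger0_norm ?dist_ge0 ?dist_le1.
- by case/andP: (rinterp_range (fun i => term_eval e (args i))) => ? ?; rewrite ger0_norm.
- by apply: le_trans (ler_normD _ _) _; apply: lerD.
- by rewrite normrM; apply: ler_wpM2l.
- exact: (norm_sup_image_le m0).
- exact: (norm_inf_image_le m0).
Qed.

Lemma term_eval_ext L (M : structure L) (t : term L) (e1 e2 : nat -> M) :
  (forall x, term_fv t x -> e1 x = e2 x) -> term_eval e1 t = term_eval e2 t.
Proof.
elim: t => [y|c|F args IH] //= e12; first exact: e12.
by congr finterp; apply: funext => i; apply: IH => x fv_x; apply: e12; exists i.
Qed.

Lemma formula_eval_ext L (M : structure L) (p : formula L) (e1 e2 : nat -> M) :
  (forall x, formula_fv p x -> e1 x = e2 x) -> formula_eval e1 p = formula_eval e2 p.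
Proof.
elim: p e1 e2 => [|t1 t2|P args|p IHp q IHq|r p IHp|y p IHp|y p IHp] e1 e2 //= e12.
- by congr dist; apply: term_eval_ext => x fv_x; apply: e12; [left|right].
- by congr rinterp; apply: funext => i; apply: term_eval_ext => x fv_x; apply: e12; exists i.
- by rewrite (IHp e1 e2) ?(IHq e1 e2) // => x fv_x; apply: e12; [right|left].
- by rewrite (IHp e1 e2).
- congr sup; apply: eq_imagel => m _; apply: IHp => x fv_x.
  by rewrite /update; case: eqP => // neq_xy; apply: e12.
- congr inf; apply: eq_imagel => m _; apply: IHp => x fv_x.
  by rewrite /update; case: eqP => // neq_xy; apply: e12.
Qed.

Lemma sentence_eval L (M : structure L) (p : formula L) (e1 e2 : nat -> M) :
  sentence p -> formula_eval e1 p = formula_eval e2 p.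
Proof. by move=> p_closed; apply: formula_eval_ext => x /p_closed. Qed.

Lemma comb_formula_eval L (M : structure L) (e : nat -> M) (l : seq (R * formula L)) :
  formula_eval e (comb_formula l) = \sum_(p <- l) p.1 * formula_eval e p.2.
Proof. by elim: l => [|p l IH] /=; rewrite ?big_nil ?mul0r // big_cons IH. Qed.

(** * Means *)

Definition bounded (I : Type) (f : I -> R) := exists C, forall i, `|f i| <= C.

Section Bounded.
Variable I : Type.
Implicit Types f g : I -> R.

Lemma bounded_cst (c : R) : bounded (fun _ : I => c).
Proof. by exists `|c|. Qed.

Lemma boundedD f g : bounded f -> bounded g -> bounded (fun i => f i + g i).
Proof.
move=> [C f_le] [D g_le]; exists (C + D) => i.
by apply: le_trans (ler_normD _ _) _; apply: lerD.
Qed.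

Lemma boundedZ (c : R) f : bounded f -> bounded (fun i => c * f i).
Proof. by move=> [C f_le]; exists (`|c| * C) => i; rewrite normrM ler_wpM2l. Qed.

Lemma boundedN f : bounded f -> bounded (fun i => - f i).
Proof. by move=> [C f_le]; exists C => i; rewrite normrN. Qed.

Lemma boundedB f g : bounded f -> bounded g -> bounded (fun i => f i - g i).
Proof. by move=> bf /boundedN; apply: boundedD. Qed.

Lemma bounded_norm f : bounded f -> bounded (fun i => `|f i|).
Proof. by move=> [C f_le]; exists C => i; rewrite normr_id. Qed.

Lemma bounded_sum n (F : 'I_n -> I -> R) :
  (forall j, bounded (F j)) -> bounded (fun i => \sum_(j < n) F j i).
Proof.
elim: n F => [|n IH] F bF; first by exists 0 => i; rewrite big_ord0 normr0.
have [C le_C] := boundedD (IH _ (fun j => bF (widen_ord (leqnSn n) j))) (bF ord_max).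
by exists C => i; rewrite big_ord_recr; apply: le_C.
Qed.

End Bounded.
Arguments bounded_cst {I}.

Record mean (I : Type) := Mean {
  mean_op :> (I -> R) -> R;
  meanD : forall f g, bounded f -> bounded g ->
    mean_op (fun i => f i + g i) = mean_op f + mean_op g;
  meanZ : forall c f, bounded f -> mean_op (fun i => c * f i) = c * mean_op f;
  ler_mean : forall f g, bounded f -> bounded g -> (forall i, f i <= g i) ->
    mean_op f <= mean_op g;
  meanC : forall c, mean_op (fun _ => c) = c
}.

Section MeanTheory.
Variables (I : Type) (Lam : mean I).
Implicit Types f g : I -> R.

Lemma meanN f : bounded f -> Lam (fun i => - f i) = - Lam f.
Proof.
move=> bf; rewrite -mulN1r -(meanZ Lam (-1) bf).
by congr (mean_op Lam _); apply: funext => i; rewrite mulN1r.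
Qed.

Lemma meanB f g : bounded f -> bounded g -> Lam (fun i => f i - g i) = Lam f - Lam g.
Proof. by move=> bf bg; rewrite meanD ?meanN //; apply: boundedN. Qed.

Lemma mean_ge0 f : bounded f -> (forall i, 0 <= f i) -> 0 <= Lam f.
Proof. by move=> bf f_ge0; rewrite -(meanC Lam 0); apply: ler_mean => //; apply: bounded_cst. Qed.

Lemma mean_le_cst f (C : R) : bounded f -> (forall i, f i <= C) -> Lam f <= C.
Proof. by move=> bf f_le; rewrite -(meanC Lam C); apply: ler_mean => //; apply: bounded_cst. Qed.

Lemma ler_norm_mean f : bounded f -> `|Lam f| <= Lam (fun i => `|f i|).
Proof.
move=> bf; have bnf := bounded_norm bf.
rewrite ler_norml -meanN //; apply/andP; split; apply: ler_mean => //.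
- exact: boundedN.
- by move=> i; rewrite lerNl -normrN ler_norm.
- by move=> i; rewrite ler_norm.
Qed.

Lemma norm_mean_le f (C : R) : (forall i, `|f i| <= C) -> `|Lam f| <= C.
Proof.
move=> f_le; have bf : bounded f by exists C.
by apply: le_trans (ler_norm_mean bf) (mean_le_cst (bounded_norm bf) f_le).
Qed.

Lemma mean_sum n (F : 'I_n -> I -> R) : (forall j, bounded (F j)) ->
  Lam (fun i => \sum_(j < n) F j i) = \sum_(j < n) Lam (F j).
Proof.
elim: n F => [|n IH] F bF.
  by under eq_fun do rewrite big_ord0; rewrite big_ord0 meanC.
under eq_fun do rewrite big_ord_recr /=.
rewrite meanD ?big_ord_recr ?IH //; last exact: bounded_sum.
Qed.

Lemma sup_mean (Y : I -> Type) (y0 : forall i, Y i) (g : forall i, Y i -> R) (C : R) :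
  (forall i y, `|g i y| <= C) ->
  sup [set Lam (fun i => g i (yh i)) | yh in [set: forall i, Y i]] =
  Lam (fun i => sup [set g i y | y in [set: Y i]]).
Proof.
move=> g_le; have bg yh : bounded (fun i => g i (yh i)) by exists C.
have bsup : bounded (fun i => sup [set g i y | y in [set: Y i]]).
  by exists C => i; apply: norm_sup_image_le (y0 i) _.
pose G yh := Lam (fun i => g i (yh i)).
have mean_g_le yh : `|G yh| <= C by apply: norm_mean_le.
apply/eqP; rewrite eq_le; apply/andP; split.
  apply: (sup_image_le y0) => yh.
  by apply: ler_mean => // i; apply: le_sup_image (y0 i) (g_le i) _.
apply/ler_addgt0Pr => eps eps_gt0.
have near_sup i := sup_image_adherent (y0 i) (g_le i) eps_gt0.
pose yh i := projT1 (cid (near_sup i)).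
rewrite -lerBlDr; apply: le_trans (le_sup_image y0 mean_g_le yh).
rewrite -[X in _ - X](meanC Lam eps) -meanB //; last exact: bounded_cst.
apply: ler_mean; [exact: boundedB bsup (bounded_cst _)|exact: bg|].
by move=> i; apply/ltW/(projT2 (cid (near_sup i))).
Qed.

Lemma inf_mean (Y : I -> Type) (y0 : forall i, Y i) (g : forall i, Y i -> R) (C : R) :
  (forall i y, `|g i y| <= C) ->
  inf [set Lam (fun i => g i (yh i)) | yh in [set: forall i, Y i]] =
  Lam (fun i => inf [set g i y | y in [set: Y i]]).
Proof.
move=> g_le; have bg yh : bounded (fun i => g i (yh i)) by exists C.
transitivity (Lam (fun i => - sup [set - g i y | y in [set: Y i]])); last first.
  by congr (mean_op Lam _); apply: funext => i; rewrite inf_image.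
rewrite inf_image meanN; last first.
  by exists C => i; apply: (norm_sup_image_le (y0 i)) => y; rewrite normrN.
rewrite -(sup_mean y0 (g := fun i y => - g i y) (C := C)); last by move=> i y; rewrite normrN.
by congr (- sup _); apply: eq_imagel => yh _; rewrite meanN.
Qed.

End MeanTheory.

(** * Mean products and Łoś's theorem *)

Section MeanProduct.
Variables (L : language) (I : Type) (Lam : mean I) (M : I -> structure L).

Definition prod_pt := forall i, M i.

Definition mean_dist (x y : prod_pt) := Lam (fun i => dist (x i) (y i)).

Lemma bounded_dist (x y : prod_pt) : bounded (fun i => dist (x i) (y i)).
Proof. by exists 1 => i; rewrite ger0_norm ?dist_ge0 ?dist_le1. Qed.

Lemma mean_dist_ge0 x y : 0 <= mean_dist x y.
Proof. by apply: mean_ge0 (bounded_dist x y) _ => i; apply: dist_ge0. Qed.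

Lemma mean_dist_le1 x y : mean_dist x y <= 1.
Proof. by apply: mean_le_cst (bounded_dist x y) _ => i; apply: dist_le1. Qed.

Lemma mean_distC x y : mean_dist x y = mean_dist y x.
Proof. by congr (mean_op Lam _); apply: funext => i; rewrite dist_sym. Qed.

Lemma mean_dist_triangle x y z : mean_dist x z <= mean_dist x y + mean_dist y z.
Proof.
rewrite /mean_dist -meanD; [|exact: bounded_dist..].
apply: ler_mean; [exact: bounded_dist|exact: boundedD (bounded_dist _ _) (bounded_dist _ _)|].
by move=> i; apply: dist_triangle.
Qed.

Lemma mean_dist_refl x : mean_dist x x = 0.
Proof.
rewrite -(meanC Lam 0); congr (mean_op Lam _).
by apply: funext => i; apply/dist_eq0.
Qed.

Lemma mean_dist0_eq x y z : mean_dist x y = 0 -> mean_dist x z = mean_dist y z.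
Proof.
move=> dxy0; apply/eqP; rewrite eq_le.
have := mean_dist_triangle x y z; have := mean_dist_triangle y x z.
by rewrite [mean_dist y x]mean_distC dxy0 !add0r => -> ->.
Qed.

Lemma mean_dist_lip n (lam : R) (x y : prod_pt) (a b : 'I_n -> prod_pt) :
  (forall i, dist (x i) (y i) <= lam * \sum_(j < n) dist (a j i) (b j i)) ->
  mean_dist x y <= lam * \sum_(j < n) mean_dist (a j) (b j).
Proof.
have bsum : bounded (fun i => \sum_(j < n) dist (a j i) (b j i)).
  by apply: bounded_sum => j; apply: bounded_dist.
move=> dist_le; rewrite /mean_dist -mean_sum => [|j]; last exact: bounded_dist.
by rewrite -meanZ //; apply: ler_mean => //; [exact: bounded_dist|exact: boundedZ].
Qed.

Definition mean_rinterp (P : rel_sym L) (a : 'I_(rel_arity P) -> prod_pt) :=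
  Lam (fun i => rinterp (fun j => a j i)).

Lemma bounded_rinterp (P : rel_sym L) (a : 'I_(rel_arity P) -> prod_pt) :
  bounded (fun i => rinterp (fun j => a j i)).
Proof.
by exists 1 => i; case/andP: (rinterp_range (fun j => a j i)) => ? ?; rewrite ger0_norm.
Qed.

Lemma mean_rinterp_range (P : rel_sym L) (a : 'I_(rel_arity P) -> prod_pt) :
  0 <= mean_rinterp a <= 1.
Proof.
have rng i := rinterp_range (fun j => a j i).
apply/andP; split.
  by apply: mean_ge0 (bounded_rinterp a) _ => i; case/andP: (rng i).
by apply: mean_le_cst (bounded_rinterp a) _ => i; case/andP: (rng i).
Qed.

Lemma mean_rinterp_lip (P : rel_sym L) (a b : 'I_(rel_arity P) -> prod_pt) :
  `|mean_rinterp a - mean_rinterp b|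
    <= rel_lip P * \sum_(j < rel_arity P) mean_dist (a j) (b j).
Proof.
have bsum : bounded (fun i => \sum_(j < rel_arity P) dist (a j i) (b j i)).
  by apply: bounded_sum => j; apply: bounded_dist.
have bdiff := boundedB (bounded_rinterp a) (bounded_rinterp b).
rewrite /mean_rinterp -meanB; [|exact: bounded_rinterp..].
apply: le_trans (ler_norm_mean Lam bdiff) _.
rewrite /mean_dist -mean_sum => [|j]; last exact: bounded_dist.
rewrite -meanZ //; apply: ler_mean; [exact: bounded_norm|exact: boundedZ|].
by move=> i; apply: rinterp_lip.
Qed.

Lemma prod_inhabited : inhabited prod_pt.
Proof. by constructor => i; apply: epsilon (carrier_inhabited (M i)) (fun _ => True). Qed.

(* The quotient by null distance, via Hilbert-choice representatives. *)
Definition canon (x : prod_pt) : prod_pt := epsilon (inhabits x) (fun y => mean_dist y x = 0).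

Lemma mean_dist_canon x : mean_dist (canon x) x = 0.
Proof.
by apply: (epsilon_spec _ (fun y => mean_dist y x = 0)); exists x; apply: mean_dist_refl.
Qed.

Lemma canon_eq x y : mean_dist x y = 0 -> canon x = canon y.
Proof.
move=> dxy0; rewrite /canon (Prop_irrelevance (inhabits x) (inhabits y)).
congr epsilon; apply: funext => z; apply: propext.
by rewrite ![mean_dist z _]mean_distC (mean_dist0_eq z dxy0).
Qed.

Lemma canon_idem x : canon (canon x) = canon x.
Proof. exact/canon_eq/mean_dist_canon. Qed.

Lemma mean_dist_canonl x y : mean_dist (canon x) y = mean_dist x y.
Proof. exact/mean_dist0_eq/mean_dist_canon. Qed.

Lemma mean_dist_canonr x y : mean_dist x (canon y) = mean_dist x y.
Proof. by rewrite mean_distC mean_dist_canonl mean_distC. Qed.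

Definition mean_quot := {x : prod_pt | canon x = x}.

Definition cls (x : prod_pt) : mean_quot := exist _ (canon x) (canon_idem x).

Lemma cls_val (a : mean_quot) : cls (sval a) = a.
Proof. by case: a => x canon_x; apply: eq_exist. Qed.

Lemma image_cls (T : Type) (f : mean_quot -> T) :
  [set f a | a in [set: mean_quot]] = [set f (cls x) | x in [set: prod_pt]].
Proof.
apply/seteqP; split=> _ [a _ <-]; last by exists (cls a).
by exists (sval a) => //; rewrite cls_val.
Qed.

Definition quot_dist (a b : mean_quot) := mean_dist (sval a) (sval b).

Lemma quot_dist_eq0 a b : quot_dist a b = 0 <-> a = b.
Proof.
split=> [|->]; last exact: mean_dist_refl.
case: a b => [x canon_x] [y canon_y] /= dxy0.
by apply: eq_exist; rewrite -canon_x -canon_y; apply: canon_eq.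
Qed.

Definition mean_complete :=
  forall u : nat -> prod_pt, cauchy mean_dist u -> exists y, converges_to mean_dist u y.

Hypothesis Lam_complete : mean_complete.

Lemma quot_complete (u : nat -> mean_quot) :
  cauchy quot_dist u -> exists l, converges_to quot_dist u l.
Proof.
move=> /(Lam_complete (u := fun n => sval (u n)))[y u_to_y].
exists (cls y) => eps /u_to_y[N N_spec]; exists N => n le_N.
by rewrite /quot_dist /= mean_dist_canonr; apply: N_spec.
Qed.

Definition quot_cinterp (c : const_sym L) : mean_quot := cls (fun i => cinterp (M i) c).

Definition quot_finterp (F : func_sym L) (a : 'I_(func_arity F) -> mean_quot) : mean_quot :=
  cls (fun i => finterp (fun j => sval (a j) i)).

Lemma quot_finterp_lip (F : func_sym L) (a b : 'I_(func_arity F) -> mean_quot) :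
  quot_dist (quot_finterp a) (quot_finterp b)
    <= func_lip F * \sum_(j < func_arity F) quot_dist (a j) (b j).
Proof.
rewrite /quot_dist /= mean_dist_canonl mean_dist_canonr.
by apply: mean_dist_lip => i; apply: finterp_lip.
Qed.

Definition mean_product : structure L :=
  @Structure L mean_quot
    (let: inhabits x := prod_inhabited in inhabits (cls x)) quot_dist
    (fun _ _ => mean_dist_ge0 _ _) quot_dist_eq0 (fun _ _ => mean_distC _ _)
    (fun _ _ _ => mean_dist_triangle _ _ _) (fun _ _ => mean_dist_le1 _ _) quot_complete
    quot_cinterp quot_finterp quot_finterp_lip
    (fun P a => mean_rinterp (fun j => sval (a j)))
    (fun P a => mean_rinterp_range _) (fun P a b => mean_rinterp_lip _ _).

Lemma term_eval_cls (eh : nat -> prod_pt) (t : term L) :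
  mean_dist (sval (@term_eval L mean_product (fun n => cls (eh n)) t))
    (fun i => term_eval (fun n => eh n i) t) = 0.
Proof.
elim: t => [y|c|F args IH] /=; [exact: mean_dist_canon..|].
rewrite mean_dist_canonl; apply/eqP; rewrite eq_le mean_dist_ge0 andbT.
apply: le_trans (mean_dist_lip _) _ => [i|]; first exact: finterp_lip.
by rewrite big1 ?mulr0.
Qed.

Lemma bounded_formula_eval (e : forall i, nat -> M i) (p : formula L) :
  bounded (fun i => formula_eval (e i) p).
Proof. by exists (formula_bound p) => i; apply: norm_formula_eval_le. Qed.

Lemma eval_update_cls (p : formula L) (y : nat) (eh : nat -> prod_pt) (xh : prod_pt) :
  (forall eh, @formula_eval L mean_product (fun n => cls (eh n)) p =
    Lam (fun i => formula_eval (fun n => eh n i) p)) ->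
  @formula_eval L mean_product (update (fun n => cls (eh n)) y (cls xh)) p =
  Lam (fun i => formula_eval (update (fun n => eh n i) y (xh i)) p).
Proof.
move=> eval_cls.
rewrite (_ : update _ _ _ = fun n => cls (update eh y xh n)); last first.
  by apply: funext => n; rewrite (update_map cls).
rewrite eval_cls; congr (mean_op Lam _); apply: funext => i; congr formula_eval.
by apply: funext => n; exact: (update_map (fun x => x i)).
Qed.

Lemma formula_eval_cls (p : formula L) (eh : nat -> prod_pt) :
  @formula_eval L mean_product (fun n => cls (eh n)) p =
  Lam (fun i => formula_eval (fun n => eh n i) p).
Proof.
have [x0] := prod_inhabited.
elim: p eh => [|t1 t2|P args|p IHp q IHq|r p IHp|y p IHp|y p IHp] eh /=.
- by rewrite meanC.
- rewrite /quot_dist (mean_dist0_eq _ (term_eval_cls eh t1)) mean_distC.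
  by rewrite (mean_dist0_eq _ (term_eval_cls eh t2)) mean_distC.
- apply/eqP; rewrite -subr_eq0 -normr_le0.
  apply: le_trans (mean_rinterp_lip _ _) _.
  by rewrite big1 ?mulr0 // => j _; apply: term_eval_cls.
- by rewrite IHp IHq meanD //; apply: bounded_formula_eval.
- by rewrite IHp meanZ //; apply: bounded_formula_eval.
- rewrite image_cls; under eq_imagel do rewrite eval_update_cls //.
  apply: (sup_mean Lam x0 (g := fun i m => formula_eval (update (fun n => eh n i) y m) p)).
  by move=> i m; apply: norm_formula_eval_le.
- rewrite image_cls; under eq_imagel do rewrite eval_update_cls //.
  apply: (inf_mean Lam x0 (g := fun i m => formula_eval (update (fun n => eh n i) y m) p)).
  by move=> i m; apply: norm_formula_eval_le.
Qed.

Lemma los (p : formula L) (e : nat -> mean_product) :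
  formula_eval e p = Lam (fun i => formula_eval (fun n => sval (e n) i) p).
Proof. by rewrite -formula_eval_cls; congr formula_eval; apply: funext => n; rewrite cls_val. Qed.

End MeanProduct.

Section Average.
Variable k : nat.
Local Notation K := (k.+1%:R : R).

Definition avg (f : 'I_k.+1 -> R) : R := K^-1 * \sum_(i < k.+1) f i.

Lemma avgD f g : bounded f -> bounded g -> avg (fun i => f i + g i) = avg f + avg g.
Proof. by move=> _ _; rewrite /avg big_split mulrDr. Qed.

Lemma avgZ c f : bounded f -> avg (fun i => c * f i) = c * avg f.
Proof. by move=> _; rewrite /avg -mulr_sumr mulrCA. Qed.

Lemma ler_avg f g : bounded f -> bounded g -> (forall i, f i <= g i) -> avg f <= avg g.
Proof.
by move=> _ _ le_fg; rewrite ler_wpM2l ?invr_ge0 ?ler0n // ler_sum.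
Qed.

Lemma avgC c : avg (fun _ => c) = c.
Proof.
rewrite /avg sumr_const card_ord -[c *+ _]mulr_natr mulrC -mulrA mulfV ?mulr1 //.
by rewrite lt0r_neq0 ?ltr0Sn.
Qed.

Definition avg_mean : mean 'I_k.+1 := Mean avgD avgZ ler_avg avgC.

Lemma le_avg f j : (forall i, 0 <= f i) -> f j <= K * avg f.
Proof.
move=> f_ge0; rewrite /avg mulrA mulfV ?lt0r_neq0 ?ltr0Sn // mul1r.
by rewrite (bigD1 j) //= lerDl sumr_ge0.
Qed.

Lemma avg_complete L (M : 'I_k.+1 -> structure L) : mean_complete avg_mean M.
Proof.
move=> u u_cauchy.
have coord_cauchy j : cauchy (@dist L (M j)) (fun n => u n j).
  move=> eps eps_gt0; have [N N_spec] := u_cauchy _ (divr_gt0 eps_gt0 (ltr0Sn _ k)).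
  exists N => m n le_m le_n; apply: le_lt_trans (le_avg j (fun i => dist_ge0 _ _)) _.
  by rewrite mulrC -ltr_pdivlMr ?ltr0Sn //; apply: N_spec.
have coord_lim j := dist_complete (coord_cauchy j).
exists (fun j => projT1 (cid (coord_lim j))) => eps eps_gt0.
have eps2_gt0 : 0 < eps / 2 by rewrite divr_gt0.
have /choice[N N_spec] := fun j => projT2 (cid (coord_lim j)) _ eps2_gt0.
exists (\max_(j < k.+1) N j)%N => n le_n.
apply: le_lt_trans (_ : eps / 2 < eps); last by lra.
apply: mean_le_cst (bounded_dist _ _) _ => j.
by apply/ltW/N_spec; apply: leq_trans le_n; apply: leq_bigmax.
Qed.

End Average.

(** * Ultralimits *)

Section Ultralimit.
Context {I : Type} (U : set_system I) {U_ultra : UltraFilter U}.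
Implicit Types f g : I -> R.

Definition ulim f : R := sup [set a | U [set i | a <= f i]].

Lemma ulim_near f eps : bounded f -> 0 < eps -> U [set i | `|f i - ulim f| < eps].
Proof.
move=> [C f_le] eps_gt0.
have f_range i : - C <= f i <= C by rewrite -ler_norml.
have S_sup : has_sup [set a | U [set i | a <= f i]].
  split; first by exists (- C); apply: filterS filterT => i _; case/andP: (f_range i).
  exists C => a /filter_ex[i /= le_a]; case/andP: (f_range i) => _; exact: le_trans.
have [a U_a lt_a] := sup_adherent eps_gt0 S_sup.
have U_gt : U [set i | ulim f - eps < f i].
  by apply: filterS U_a => i /=; apply: lt_le_trans.
have U_lt : U [set i | f i < ulim f + eps].
  case: (in_ultra_setVsetC [set i | ulim f + eps <= f i] U_ultra) => [U_ge|].
    by have := sup_upper_bound S_sup U_ge; rewrite -/(ulim f) gerDl leNgt eps_gt0.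
  by apply: filterS => i /= /negP; rewrite -ltNge.
apply: filterS (filterI U_gt U_lt) => i [/= gt_i lt_i].
by rewrite ltr_norml; apply/andP; split; lra.
Qed.

Lemma ulim_unique f l : bounded f ->
  (forall eps, 0 < eps -> U [set i | `|f i - l| < eps]) -> ulim f = l.
Proof.
move=> bf near_l; apply/eqP; rewrite -subr_eq0 -normr_le0.
apply/ler_addgt0Pr => eps eps_gt0; rewrite add0r.
have eps2_gt0 : 0 < eps / 2 by rewrite divr_gt0.
have [i [/= near1 near2]] := filter_ex (filterI (ulim_near bf eps2_gt0) (near_l _ eps2_gt0)).
have := ler_distD (f i) (ulim f) l; rewrite [`|ulim f - f i|]distrC; lra.
Qed.

Lemma ulim_le_near f g : bounded f -> bounded g -> U [set i | f i <= g i] -> ulim f <= ulim g.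
Proof.
move=> bf bg U_le; rewrite leNgt; apply/negP => lt_gf.
have eps_gt0 : 0 < (ulim f - ulim g) / 2 by rewrite divr_gt0 // subr_gt0.
have [i [[/= near_f near_g] le_i]] :=
  filter_ex (filterI (filterI (ulim_near bf eps_gt0) (ulim_near bg eps_gt0)) U_le).
by move: near_f near_g le_i; rewrite !ltr_norml => /andP[? _] /andP[_ ?] ?; lra.
Qed.

Lemma ulim_lt_near f a : bounded f -> ulim f < a -> U [set i | f i < a].
Proof.
move=> bf lt_a; have /(ulim_near bf) : 0 < a - ulim f by rewrite subr_gt0.
by apply: filterS => i /=; rewrite ltr_norml => /andP[_ ?]; lra.
Qed.

Lemma ulimC c : ulim (fun _ => c) = c.
Proof.
apply: ulim_unique => [|eps eps_gt0]; first exact: bounded_cst.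
by apply: filterS filterT => i _ /=; rewrite subrr normr0.
Qed.

Lemma ulimD f g : bounded f -> bounded g -> ulim (fun i => f i + g i) = ulim f + ulim g.
Proof.
move=> bf bg; apply: ulim_unique => [|eps eps_gt0]; first exact: boundedD.
have eps2_gt0 : 0 < eps / 2 by rewrite divr_gt0.
apply: filterS (filterI (ulim_near bf eps2_gt0) (ulim_near bg eps2_gt0)) => i [/= near_f near_g].
by move: near_f near_g; rewrite !ltr_norml => /andP[? ?] /andP[? ?]; apply/andP; split; lra.
Qed.

Lemma ulimZ c f : bounded f -> ulim (fun i => c * f i) = c * ulim f.
Proof.
move=> bf; apply: ulim_unique => [|eps eps_gt0]; first exact: boundedZ.
have c1_gt0 : 0 < `|c| + 1 by rewrite ltr_wpDl.
apply: filterS (ulim_near bf (divr_gt0 eps_gt0 c1_gt0)) => i /= near_f.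
rewrite -mulrBr normrM; apply: le_lt_trans (_ : _ <= (`|c| + 1) * `|f i - ulim f|) _.
  by rewrite ler_wpM2r ?lerDl.
by rewrite mulrC -ltr_pdivlMr.
Qed.

Lemma ler_ulim f g : bounded f -> bounded g -> (forall i, f i <= g i) -> ulim f <= ulim g.
Proof.
by move=> bf bg le_fg; apply: ulim_le_near => //; apply: filterS filterT => i _; apply: le_fg.
Qed.

Definition ulim_mean : mean I := Mean ulimD ulimZ ler_ulim ulimC.

End Ultralimit.

Section UltraproductComplete.
Context {I : Type} (U : set_system I) {U_ultra : UltraFilter U}.
Variables (L : language) (M : I -> structure L).
Local Notation dU := (mean_dist (ulim_mean (U := U)) (M := M)).

Lemma ulim_fast_limit (x : nat -> prod_pt M) :
  (forall k, dU (x k) (x k.+1) < 2 ^- k) ->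
  exists y, forall m, dU (x m) y <= 2 * 2 ^- m.
Proof.
move=> x_step.
pose A k := [set i | forall j, (j < k)%N -> dist (x j i) (x j.+1 i) < 2 ^- j].
have U_A k : U (A k).
  elim: k => [|k IH]; first by apply: filterS filterT => i _ [].
  apply: filterS (filterI IH (ulim_lt_near (bounded_dist _ _) (x_step k))) => i [/= A_i lt_i] j.
  by rewrite ltnS leq_eqVlt => /predU1P[->|/A_i].
(* [w k] follows [x k] on [A k] and freezes elsewhere, so every coordinate
   of [w] is geometrically Cauchy. *)
pose w := fix w k : prod_pt M :=
  if k is k'.+1 then fun i => if `[< A k i >] then x k i else w k' i else x 0%N.
have w_A k i : A k i -> w k i = x k i by case: k => [|k] // A_i /=; rewrite asboolT.
have w_step i k : dist (w k i) (w k.+1 i) <= 2 ^- k.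
  rewrite [w k.+1 i]/=; case: ifPn => [/asboolP A_i|_]; last by rewrite dist_xx ltW ?expN2_gt0.
  by rewrite w_A; [exact/ltW/A_i|move=> j /ltnW; apply: A_i].
pose y i := projT1 (cid (geometric_limit (w_step i))).
exists y => m; rewrite -(ulimC (U := U) (2 * 2 ^- m)).
apply: ulim_le_near; [exact: bounded_dist|exact: bounded_cst|].
apply: filterS (U_A m) => i A_i /=; rewrite -w_A //.
exact: (projT2 (cid (geometric_limit (w_step i)))).
Qed.

Lemma ulim_complete : mean_complete (ulim_mean (U := U)) M.
Proof.
move=> u /cauchy_fast_subseq[phi [phi_mono phi_spec]].
have [y x_to_y] := @ulim_fast_limit (fun k => u (phi k))
  (fun k => phi_spec k _ _ (leqnn _) (phi_mono k)).
exists y => eps eps_gt0.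
have [k lt_k] : exists k, 2 ^- k < eps / 3 by apply: exists_expN2_lt; rewrite divr_gt0.
exists (phi k) => n le_n; apply: le_lt_trans (mean_dist_triangle _ _ (u (phi k)) _) _.
by have := phi_spec k n (phi k) le_n (leqnn _); have := x_to_y k; lra.
Qed.

End UltraproductComplete.

(** * Approachability *)

Lemma max0_sqrD (s t : R) :
  Num.max (s + t) 0 ^+ 2 <= Num.max s 0 ^+ 2 + 2 * Num.max s 0 * t + t ^+ 2.
Proof.
have [s_le0|s_gt0] := leP s 0; have [st_le0|st_gt0] := leP (s + t) 0.
all: rewrite ?(max_r s_le0) ?(max_l (ltW s_gt0)) ?(max_r st_le0) ?(max_l (ltW st_gt0)).
all: rewrite !expr2; nra.
Qed.

Lemma max0_ge0 (s : R) : 0 <= Num.max s 0.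
Proof. by rewrite le_max lexx orbT. Qed.

Lemma le_max0 (s : R) : s <= Num.max s 0.
Proof. by rewrite le_max lexx. Qed.

Lemma le_sum_In (A : Type) (f : A -> R) (s : seq A) (x : A) :
  (forall y, 0 <= f y) -> List.In x s -> f x <= \sum_(y <- s) f y.
Proof.
move=> f_ge0; elim: s => [|a s IH] //= [->|/IH le_x]; rewrite big_cons.
  by rewrite lerDl sumr_ge0.
by apply: le_trans le_x _; rewrite lerDr.
Qed.

Section Approachability.
Variables (X C : Type) (v : C -> X -> R) (b : C -> R) (cs : seq C).
Hypothesis v_le : forall c x, `|v c x| <= b c.
Hypothesis v_comb_le0 : forall w : C -> R, (forall c, 0 <= w c) ->
  exists x, \sum_(c <- cs) w c * v c x <= 0.

Definition cumul (h : seq X) (c : C) := \sum_(x <- h) v c x.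

(* Blackwell: answering the positive part of the current cumulative vector
   keeps its squared norm linear in the number of rounds. *)
Lemma cumul_sqr_le k : exists h : seq X, size h = k /\
  \sum_(c <- cs) Num.max (cumul h c) 0 ^+ 2 <= k%:R * \sum_(c <- cs) b c ^+ 2.
Proof.
elim: k => [|k [h [size_h IH]]].
  by exists [::]; split=> //; rewrite mul0r big1 // => c _; rewrite /cumul big_nil max_l // expr0n.
have [x x_le0] := v_comb_le0 (fun c => @max0_ge0 (cumul h c)).
exists (x :: h); split; first by rewrite /= size_h.
apply: le_trans (_ : \sum_(c <- cs) (Num.max (cumul h c) 0 ^+ 2 +
    2 * Num.max (cumul h c) 0 * v c x + v c x ^+ 2) <= _).
  by apply: ler_sum => c _; rewrite /cumul big_cons addrC; apply: max0_sqrD.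
rewrite !big_split /= -[k.+1%:R]natr1 mulrDl mul1r.
have -> : \sum_(c <- cs) 2 * Num.max (cumul h c) 0 * v c x =
    2 * \sum_(c <- cs) Num.max (cumul h c) 0 * v c x.
  by rewrite mulr_sumr; apply: eq_bigr => c _; rewrite mulrA.
have sq_le : \sum_(c <- cs) v c x ^+ 2 <= \sum_(c <- cs) b c ^+ 2.
  by apply: ler_sum => c _; have := v_le c x; rewrite ler_norml => /andP[? ?]; nra.
by move: IH x_le0 sq_le; lra.
Qed.

Lemma approachability (delta : R) : 0 < delta ->
  exists h : seq X, (0 < size h)%N /\ forall c, List.In c cs -> cumul h c <= (size h)%:R * delta.
Proof.
move=> delta_gt0; set B := \sum_(c <- cs) b c ^+ 2.
have B_ge0 : 0 <= B by apply: sumr_ge0 => c _; apply: sqr_ge0.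
have [k lt_k] : exists k : nat, k.+1%:R^-1 < delta ^+ 2 / (B + 1).
  by apply: exists_inv_succ_lt; rewrite divr_gt0 ?exprn_gt0 ?ltr_wpDl.
have k_gt0 : 0 < k.+1%:R :> R by apply: ltr0Sn.
have B_lt : B + 1 < k.+1%:R * delta ^+ 2.
  by move: lt_k; rewrite ltr_pdivlMr ?ltr_wpDl // ltr_pdivrMl.
have [h [size_h sum_le]] := cumul_sqr_le k.+1.
exists h; split=> [|c c_in]; first by rewrite size_h.
rewrite size_h leNgt; apply/negP => lt_c.
have lt_sq : (k.+1%:R * delta) ^+ 2 < Num.max (cumul h c) 0 ^+ 2.
  rewrite ltrXn2r ?nnegrE ?mulr_ge0 ?max0_ge0 ?ltW //.
  by apply: lt_le_trans lt_c _; rewrite le_max0.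
have le_S := le_sum_In (f := fun c => Num.max (cumul h c) 0 ^+ 2) (fun c => sqr_ge0 _) c_in.
have := lt_le_trans lt_sq (le_trans le_S sum_le).
have : k.+1%:R * B < k.+1%:R * (k.+1%:R * delta ^+ 2) by rewrite ltr_pM2l //; lra.
by rewrite exprMn expr2 -mulrA -/B; lra.
Qed.

End Approachability.

(** * Compactness *)

Section ApproximateModels.
Variables (L : language) (T : theory L).

Definition in_theory (cs : seq (condition L)) := forall c, List.In c cs -> T c.

Hypotheses (T_closed : is_theory T) (T_affsat : affinely_satisfiable T).

Definition approx_model (N : structure L) (cs : seq (condition L)) (delta : R) :=
  forall c, List.In c cs -> forall e : nat -> N,
    formula_eval e c.1 <= formula_eval e c.2 + delta.

Definition condition_gap (c : condition L) (x : {N : structure L & N}) :=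
  formula_eval (fun _ => projT2 x) c.1 - formula_eval (fun _ => projT2 x) c.2.

Lemma norm_condition_gap_le c x :
  `|condition_gap c x| <= formula_bound c.1 + formula_bound c.2.
Proof.
apply: le_trans (ler_normB _ _) _.
by apply: lerD; apply: norm_formula_eval_le.
Qed.

Lemma condition_gap_comb_le0 (cs : seq (condition L)) (w : condition L -> R) :
  in_theory cs -> (forall c, 0 <= w c) ->
  exists x, \sum_(c <- cs) w c * condition_gap c x <= 0.
Proof.
move=> cs_T w_ge0.
have [|N N_sat] := T_affsat (l := [seq (w c, c) | c <- cs]).
  move=> _ /List.in_map_iff[c [<- c_in]]; split; [exact: cs_T|exact: w_ge0].
have [n] := carrier_inhabited N; exists (existT _ N n).
move: (N_sat (fun _ => n)); rewrite /comb_condition /= !comb_formula_eval -!map_comp.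
by rewrite !big_map /condition_gap /= -subr_le0 -sumrB; under eq_bigr do rewrite mulrBr.
Qed.

Lemma approx_satisfiable (cs : seq (condition L)) (delta : R) :
  in_theory cs -> 0 < delta -> exists N, approx_model N cs delta.
Proof.
move=> cs_T delta_gt0.
have [h [size_gt0 cumul_le]] := approachability norm_condition_gap_le
  (fun w => condition_gap_comb_le0 cs_T) delta_gt0.
case: h size_gt0 cumul_le => [//|x0 h] _ cumul_le.
pose Ms (j : 'I_(size h).+1) := projT1 (nth x0 (x0 :: h) j).
exists (mean_product (avg_complete (M := Ms))) => c c_in e.
have [c1_closed c2_closed] := T_closed (cs_T c c_in).
rewrite !los -lerBlDl -meanB; [|exact: bounded_formula_eval..].
rewrite /= /avg ler_pdivrMl ?ltr0Sn //; apply: le_trans (cumul_le c c_in).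
rewrite /cumul (big_nth x0) big_mkord; apply: ler_sum => j _.
rewrite (sentence_eval _ (fun _ => projT2 (nth x0 (x0 :: h) j)) c1_closed)
  (sentence_eval _ (fun _ => projT2 (nth x0 (x0 :: h) j)) c2_closed); exact: lexx.
Qed.

End ApproximateModels.

Section Compactness.
Variables (L : language) (T : theory L).

Definition fragment := {cs | in_theory T cs}.

Lemma fragment_catP (cs1 cs2 : fragment) : in_theory T (sval cs1 ++ sval cs2).
Proof.
by move=> c c_in; case: (List.in_app_or _ _ _ c_in); [apply: (svalP cs1)|apply: (svalP cs2)].
Qed.

Definition fragment_cat (cs1 cs2 : fragment) : fragment :=
  exist (in_theory T) _ (@fragment_catP cs1 cs2).

Definition fragment_base (i : fragment * nat) : set (fragment * nat) :=
  [set j | (forall c, List.In c (sval i.1) -> List.In c (sval j.1)) /\ (i.2 <= j.2)%N].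

Lemma fragment_filter_proper : ProperFilter (filter_from setT fragment_base).
Proof.
apply: filter_from_proper => [|i _]; last by exists i.
apply: filter_fromT_filter.
  by exists (exist (in_theory T) [::] (fun c => False_ind (T c)), 0%N).
move=> i j; exists (fragment_cat i.1 j.1, maxn i.2 j.2).
move=> k [/= sub_k]; rewrite geq_max => /andP[le_i le_j]; split; split=> // c c_in;
  apply: sub_k; apply: List.in_or_app; by [left|right].
Qed.

Lemma ultraproduct_model (U : set_system (fragment * nat)) {U_ultra : UltraFilter U}
    (N : fragment * nat -> structure L) :
  filter_from setT fragment_base `<=` U ->
  (forall i, approx_model (N i) (sval i.1) (i.2.+1%:R^-1)) ->
  is_model (mean_product (ulim_complete (U := U) (M := N))) T.
Proof.
move=> base_U N_approx c T_c e; rewrite !los.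
apply/ler_addgt0Pr => eps /exists_inv_succ_lt[m lt_m].
have c_T : in_theory T [:: c] by move=> c' [<-|[]].
have U_c : U (fragment_base (exist _ _ c_T, m)).
  by apply: base_U; exists (exist _ _ c_T, m).
pose f2 i := formula_eval (fun n => sval (e n) i) c.2.
apply: le_trans (_ : ulim U (fun i => f2 i + m.+1%:R^-1) <= _).
  apply: ulim_le_near; [exact: bounded_formula_eval| |].
    exact: boundedD (bounded_formula_eval _ _) (bounded_cst _).
  apply: filterS U_c => i [/= c_in le_m].
  apply: le_trans (N_approx i c (c_in c (or_introl erefl)) _) _.
  by rewrite lerD2l lef_pV2 ?posrE ?ltr0Sn // ler_nat.
rewrite ulimD ?ulimC ?lerD2l ?ltW //; [exact: bounded_formula_eval|exact: bounded_cst].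
Qed.

End Compactness.

Theorem mainTheorem2 (L : language) (T : theory L) :
  is_theory T -> affinely_satisfiable T -> exists M : structure L, is_model M T.
Proof.
move=> T_closed T_affsat.
have /choice[N N_approx] : forall i : fragment T * nat,
    exists N, approx_model N (sval i.1) (i.2.+1%:R^-1).
  move=> [[cs cs_T] m]; apply: (approx_satisfiable T_closed T_affsat cs_T).
  by rewrite invr_gt0 ltr0Sn.
have [U [U_ultra base_U]] := ultraFilterLemma (fragment_filter_proper T).
by exists (mean_product (ulim_complete (U := U) (M := N))); apply: ultraproduct_model.
Qed.
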